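(* Let $\mathbf P=UV^\top$ be the transition matrix of a Markov chain on $\{1,\dots,p\}$ with stationary distribution $\pi$ having all entries positive, where $U,V\in\mathbb R^{p\times r}$ are entrywise nonnegative with $U\mathbf 1_r=\mathbf 1_p$, $V^\top\mathbf 1_p=\mathbf 1_r$, each meta-state has an anchor state, and $\mathrm{rank}(U)=r$. Let $\mathbf h_1,\dots,\mathbf h_r$ be the right singular vectors of $\mathbf Q=\mathrm{diag}(\pi)\mathbf P[\mathrm{diag}(\pi)]^{-1/2}$ associated with its nonzero singular values $\sigma_1\ge\dots\ge\sigma_r$, and assume $\mathbf h_1$ has all coordinates positive. Let $\mathbf D=[\mathrm{diag}(\mathbf h_1)]^{-1}[\mathbf h_2,\dots,\mathbf h_r]\in\mathbb R^{p\times(r-1)}$. Then there exists a simplex $\mathcal S_0^*\subset\mathbb R^{r-1}$ with $r$ vertices $\mathbf b_1,\dots,\mathbf b_r$ such that all rows of $\mathbf D$ are contained in this simplex. Furthermore, for all anchor states $j$ of a same meta-state, the $j$-th row of $\mathbf D$ falls exactly onto one vertex of this simplex.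
   Context: A state $j$ is an anchor state of meta-state $k$ if $V_{jk}>0$ and $V_{js}=0$ for all $s\neq k$. *)

From HB Require Import structures.
From mathcomp Require Import all_boot all_order all_algebra.
Set Implicit Arguments. Unset Strict Implicit. Unset Printing Implicit Defensive.
Import Order.TTheory GRing.Theory Num.Theory.
Local Open Scope ring_scope.

(* Conventions: states are indexed by 'I_p, meta-states by 'I_(r.+1)
   (so the paper's r is r.+1 here), vectors in R^(r-1) are row vectors 'rV_r. *)

Definition is_stochastic (R : realFieldType) (p : nat) (P : 'M[R]_p) : Prop :=
  (forall i j, 0 <= P i j) /\ (forall i, \sum_j P i j = 1).

Definition is_stationary (R : realFieldType) (p : nat) (P : 'M[R]_p) (pi : 'rV[R]_p) : Prop :=
  [/\ pi *m P = pi, \sum_j pi 0 j = 1 & forall j, 0 <= pi 0 j].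

Definition anchor (R : realFieldType) (p m : nat) (V : 'M[R]_(p, m)) (j : 'I_p) (k : 'I_m) : Prop :=
  0 < V j k /\ forall s, s != k -> V j s = 0.

Definition Qmat (R : rcfType) (p : nat) (pi : 'rV[R]_p) (P : 'M[R]_p) : 'M[R]_p :=
  diag_mx pi *m P *m diag_mx (\row_j (Num.sqrt (pi 0 j))^-1).

(* Thin SVD Q = G diag(s) H^T: s are the nonzero singular values
   (positive, nonincreasing), columns of G / H the corresponding
   left / right singular vectors (orthonormal). *)
Definition thin_svd (R : realFieldType) (p m : nat) (Q : 'M[R]_p)
    (G : 'M[R]_(p, m)) (s : 'rV[R]_m) (H : 'M[R]_(p, m)) : Prop :=
  [/\ G^T *m G = 1%:M, H^T *m H = 1%:M,
      (forall i, 0 < s 0 i),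
      (forall i j : 'I_m, (i <= j)%N -> s 0 j <= s 0 i)
    & Q = G *m diag_mx s *m H^T].

Definition Dmat (R : realFieldType) (p r : nat) (H : 'M[R]_(p, r.+1)) : 'M[R]_(p, r) :=
  \matrix_(j < p, l < r) (H j (lift ord0 l) / H j ord0).

(* The rows of B : 'M_(r.+1, r) are the r.+1 vertices of a (nondegenerate)
   simplex in R^r, i.e. they are affinely independent: the r vectors
   b_{k} - b_0 (k = 1..r) are linearly independent. *)
Definition simplex_vertices (R : realFieldType) (r : nat) (B : 'M[R]_(r.+1, r)) : Prop :=
  (\matrix_(k < r) (row (lift ord0 k) B - row ord0 B)) \in unitmx.

Definition in_simplex (R : realFieldType) (r : nat) (B : 'M[R]_(r.+1, r)) (x : 'rV[R]_r) : Prop :=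
  exists w : 'rV[R]_(r.+1),
    [/\ forall k, 0 <= w 0 k, \sum_k w 0 k = 1 & x = w *m B].

From HB Require Import structures.
From mathcomp Require Import all_boot all_order all_algebra.
From mathcomp Require Import ring.
Set Implicit Arguments. Unset Strict Implicit. Unset Printing Implicit Defensive.
Import Order.TTheory GRing.Theory Num.Theory.
Local Open Scope ring_scope.

(* The SVD gives H = diag(pi)^(-1/2) V M with M = U^T diag(pi) G diag(s)^(-1),
   and M is invertible because H^T H = 1.  Hence row j of H is a positive
   multiple of (row j V) M, a nonnegative combination of the rows of M, and
   row j of D is the affine chart (first coordinate 1) of that point.  The
   simplex is spanned by the charts of the rows of M: for an anchor state j of
   k, (row j V) M is a positive multiple of row k of M, so h_1 > 0 forces the
   first column of M to be positive (making the combination convex), and the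
   invertibility of M makes the charts of its rows affinely independent. *)

Definition dehomogenize (R : fieldType) (r : nat) (x : 'rV[R]_r.+1) : 'rV[R]_r :=
  \row_l (x 0 (lift ord0 l) / x 0 ord0).

Lemma dehomogenizeZ (R : fieldType) (r : nat) (c : R) (x : 'rV[R]_r.+1) :
  c != 0 -> dehomogenize (c *: x) = dehomogenize x.
Proof. by move=> c_neq0; apply/rowP => l; rewrite !mxE invfM mulrACA divff ?mul1r. Qed.

Lemma row_Dmat (R : realFieldType) (p r : nat) (H : 'M[R]_(p, r.+1)) j :
  row j (Dmat H) = dehomogenize (row j H).
Proof. by apply/rowP => l; rewrite !mxE. Qed.

Lemma anchor_row_mul (R : realFieldType) (p m n : nat)
    (V : 'M[R]_(p, m)) (M : 'M[R]_(m, n)) j k :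
  anchor V j k -> row j V *m M = V j k *: row k M.
Proof.
case=> _ V_jk0; apply/rowP => i; rewrite !mxE (bigD1 k) //= big1 ?addr0.
  by rewrite !mxE.
by move=> s /V_jk0; rewrite mxE => ->; rewrite mul0r.
Qed.

Lemma thin_svd_right_vectors (R : realFieldType) (p m : nat) (Q : 'M[R]_p)
    (G H : 'M[R]_(p, m)) (s : 'rV[R]_m) :
  thin_svd Q G s H -> H = Q^T *m G *m diag_mx (\row_i (s 0 i)^-1).
Proof.
case=> GG _ s_gt0 _ ->.
rewrite !trmx_mul trmxK tr_diag_mx -!mulmxA (mulmxA G^T) GG mul1mx mulmx_diag.
rewrite -[LHS]mulmx1 -diag_const_mx; congr (_ *m diag_mx _).
by apply/rowP => i; rewrite !mxE divff // gt_eqF.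
Qed.

(* A linear dependency x among the differences of the rows lifts to the
   kernel vector (-sum x, x) of N. *)
Lemma simplex_vertices_first_col1 (R : realFieldType) (r : nat) (N : 'M[R]_r.+1) :
  N \in unitmx -> (forall k, N k ord0 = 1) ->
  simplex_vertices (\matrix_(k, l) N k (lift ord0 l)).
Proof.
move=> N_unit N_col0; rewrite /simplex_vertices unitmxE unitfE.
apply/det0P => -[x x_neq0 x_dep].
pose y := \row_k (if unlift ord0 k is Some l then x 0 l else - \sum_l x 0 l).
have yN0 : y *m N = 0.
  apply/rowP => i; rewrite /y !mxE big_ord_recl !mxE unlift_none.
  under [X in _ + X]eq_bigr => l _ do rewrite !mxE liftK.
  case: (unliftP ord0 i) => [i' ->|->].
    move/rowP/(_ i'): x_dep; rewrite !mxE => x_dep; rewrite -[RHS]x_dep.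
    rewrite mulNr mulr_suml addrC -sumrB; apply: eq_bigr => l _.
    by rewrite !mxE mulrBr.
  by under eq_bigr => l _ do rewrite N_col0 mulr1; rewrite N_col0 mulr1 addNr.
have y0 : y = 0 by rewrite -[y](mulmxK N_unit) yN0 mul0mx.
case/eqP: x_neq0; apply/rowP => l.
by move/rowP/(_ (lift ord0 l)): y0; rewrite !mxE liftK.
Qed.

Lemma simplex_vertices_dehomogenize (R : realFieldType) (r : nat) (M : 'M[R]_r.+1) :
  M \in unitmx -> (forall k, M k ord0 != 0) ->
  simplex_vertices (\matrix_k dehomogenize (row k M)).
Proof.
move=> M_unit M_col0.
pose N := diag_mx (\row_k (M k ord0)^-1) *m M.
have NE k i : N k i = M k i / M k ord0 by rewrite /N mul_diag_mx !mxE mulrC.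
have -> : \matrix_k dehomogenize (row k M) = \matrix_(k, l) N k (lift ord0 l).
  by apply/matrixP => k l; rewrite [RHS]mxE NE !mxE.
apply: simplex_vertices_first_col1 => [|k]; last by rewrite NE divff.
rewrite unitmx_mul M_unit andbT unitmxE det_diag unitfE.
by apply/prodf_neq0 => k _; rewrite mxE invr_eq0.
Qed.

Lemma in_simplex_dehomogenize (R : realFieldType) (r : nat)
    (M : 'M[R]_r.+1) (v : 'rV[R]_r.+1) :
  (forall k, 0 <= v 0 k) -> (forall k, 0 < M k ord0) -> 0 < (v *m M) 0 ord0 ->
  in_simplex (\matrix_k dehomogenize (row k M)) (dehomogenize (v *m M)).
Proof.
move=> v_ge0 M_col0 vM_gt0.
have vM0 : (v *m M) 0 ord0 = \sum_k v 0 k * M k ord0 by rewrite mxE.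
exists (\row_k (v 0 k * M k ord0 / (v *m M) 0 ord0)); split.
- by move=> k; rewrite mxE; apply/divr_ge0/ltW/vM_gt0; apply/mulr_ge0/ltW.
- under eq_bigr => k _ do rewrite mxE.
  by rewrite -mulr_suml -vM0 divff // gt_eqF.
- apply/rowP => l; rewrite !mxE mulr_suml; apply: eq_bigr => k _; rewrite !mxE.
  by field; rewrite -vM0 !gt_eqF.
Qed.

Theorem mainTheorem14 (R : rcfType) (p r : nat)
    (U V : 'M[R]_(p, r.+1)) (pi : 'rV[R]_p)
    (G H : 'M[R]_(p, r.+1)) (s : 'rV[R]_(r.+1)) :
  (forall i k, 0 <= U i k) ->
  (forall i k, 0 <= V i k) ->
  U *m (const_mx 1 : 'cV[R]_(r.+1)) = const_mx 1 ->
  V^T *m (const_mx 1 : 'cV[R]_p) = const_mx 1 ->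
  is_stochastic (U *m V^T) ->
  is_stationary (U *m V^T) pi ->
  (forall j, 0 < pi 0 j) ->
  (forall k, exists j, anchor V j k) ->
  \rank U = r.+1 ->
  thin_svd (Qmat pi (U *m V^T)) G s H ->
  (forall j, 0 < H j ord0) ->
  exists B : 'M[R]_(r.+1, r),
    [/\ simplex_vertices B,
        (forall j, in_simplex B (row j (Dmat H)))
      & (forall k j, anchor V j k -> row j (Dmat H) = row k B)].
Proof.
move=> _ V_ge0 _ _ _ _ pi_gt0 anchors _ svd H_col0.
pose c := \row_j (Num.sqrt (pi 0 j))^-1.
pose M := U^T *m diag_mx pi *m G *m diag_mx (\row_i (s 0 i)^-1).
have c_gt0 j : 0 < c 0 j by rewrite mxE invr_gt0 sqrtr_gt0.
have eH : H = diag_mx c *m V *m M.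
  by rewrite (thin_svd_right_vectors svd) /Qmat !trmx_mul !tr_diag_mx trmxK !mulmxA.
have rowH j : row j H = c 0 j *: (row j V *m M).
  by rewrite -row_mul eH -mulmxA; apply/rowP => l; rewrite mul_diag_mx !mxE.
have rowD j : row j (Dmat H) = dehomogenize (row j V *m M).
  by rewrite row_Dmat rowH dehomogenizeZ // gt_eqF.
have M_unit : M \in unitmx.
  suff /mulmx1_unit[] : H^T *m diag_mx c *m V *m M = 1%:M by [].
  by have [_ <- _ _ _] := svd; rewrite {3}eH !mulmxA.
have H_col0E j : H j ord0 = c 0 j * (row j V *m M) 0 ord0.
  by move/rowP/(_ ord0): (rowH j); rewrite [LHS]mxE [RHS]mxE.
have M_col0 k : 0 < M k ord0.
  have [j ajk] := anchors k; have := H_col0 j.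
  rewrite H_col0E (anchor_row_mul _ ajk) pmulr_rgt0 // !mxE.
  by case: ajk => /pmulr_rgt0 ->.
exists (\matrix_k dehomogenize (row k M)); split.
- by apply: simplex_vertices_dehomogenize => // k; rewrite gt_eqF.
- move=> j; rewrite rowD; apply: in_simplex_dehomogenize => // [k|].
    by rewrite mxE.
  by rewrite -(pmulr_rgt0 _ (c_gt0 j)) -H_col0E.
- move=> k j ajk; rewrite rowD (anchor_row_mul _ ajk) dehomogenizeZ ?rowK //.
  by case: ajk => /lt0r_neq0.
Qed.
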